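(* Let $(X,\delta,c)$ be an accepting automaton over $\Sigma$ such that the smallest Boolean subalgebra of $P(X)$ containing $\langle c\rangle$ is $P(X)$ itself. Then $\mathsf{cofree}(X,\delta)$ can be entirely embedded in $\mu\mathrm{PL}(\delta,c)$: every language belonging to $\mathsf{cofree}(X,\delta)$ is the language $L(\mathcal{U})$ of some state $\mathcal{U}$ of $\mu\mathrm{PL}(\delta,c)$.
   Context: $\Sigma$ is a finite alphabet, $\Sigma^\ast$ the free monoid with empty word $\epsilon$, $u^r$ the reversal of $u$. An accepting automaton is $(X,\delta,c)$ with $\delta:X\to X^\Sigma$ (extended to words by $\delta(x)(\epsilon)=x$, $\delta(x)(wa)=\delta(\delta(x)(w))(a)$) and $c\subseteq X$; for $x\in X$, $U\subseteq X$, $L(x,U)=\{u\mid\delta(x)(u)\in U\}$. $\mathsf{cofree}(X,\delta)$ is the smallest set of coequations satisfied by $(X,\delta)$: the least subautomaton of the final automaton of languages ($2^{\Sigma^\ast}$ with derivative transitions $V\mapsto\{w\mid aw\in V\}$ and final states $\{V\mid\epsilon\in V\}$) containing all languages $L(x,U)$ with $x\in X$, $U\subseteq X$. Define $\widehat{\delta}(U)(a)=\{x\mid\delta(x)(a)\in U\}$ for $U\subseteq X$, extended to words, so $\widehat{\delta}(U)(w)=\{x\mid\delta(x)(w^r)\in U\}$. Let $\langle c\rangle=\{\widehat{\delta}(c)(w)\mid w\in\Sigma^\ast\}$ and $u\approx v$ iff $\widehat{\delta}(U)(u)=\widehat{\delta}(U)(v)$ for all $U\in\langle c\rangle$. $\mu\mathrm{PL}(\delta,c)$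 has state space $P(\Sigma^\ast/{\approx})$, transition $\widehat{\sigma}(\mathcal{U})(u)=\{[w]\mid[wu^r]\in\mathcal{U}\}$ and final states $\{\mathcal{U}\mid[\epsilon]\in\mathcal{U}\}$; $L(\mathcal{U})=\{u\mid[\epsilon]\in\widehat{\sigma}(\mathcal{U})(u)\}$. *)

From mathcomp Require Import all_boot.
From mathcomp Require Import boolp classical_sets.

Set Implicit Arguments.
Unset Strict Implicit.
Unset Printing Implicit Defensive.

Local Open Scope classical_set_scope.

Section Automata.
Variables (Sigma : finType) (X : Type).

Definition dstar (delta : X -> Sigma -> X) (x : X) (w : seq Sigma) : X :=
  foldl delta x w.

Definition Lang (delta : X -> Sigma -> X) (x : X) (U : set X) : set (seq Sigma) :=
  [set u | U (dstar delta x u)].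

(* derivative transition of the final automaton of languages *)
Definition lderiv (V : set (seq Sigma)) (a : Sigma) : set (seq Sigma) :=
  [set w | V (a :: w)].

(* cofree(X,delta): the least subautomaton (derivative-closed set of languages)
   of the final automaton containing every L(x,U). *)
Inductive cofree (delta : X -> Sigma -> X) : set (seq Sigma) -> Prop :=
| cofree_gen x U : cofree delta (Lang delta x U)
| cofree_der V a : cofree delta V -> cofree delta (lderiv V a).

Definition hatdelta (delta : X -> Sigma -> X) (U : set X) (w : seq Sigma) : set X :=
  foldl (fun V a => [set x | V (delta x a)]) U w.

Definition angle (delta : X -> Sigma -> X) (c : set X) : set (set X) :=
  [set V | exists w, V = hatdelta delta c w].

Definition approx (delta : X -> Sigma -> X) (c : set X) (u v : seq Sigma) : Prop :=
  forall U, angle delta c U -> hatdelta delta U u = hatdelta delta U v.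

Definition cls (delta : X -> Sigma -> X) (c : set X) (w : seq Sigma) : set (seq Sigma) :=
  [set v | approx delta c w v].

(* states of muPL(delta,c): subsets of Sigma^*/~, i.e. sets of classes *)
Definition muPL_state (delta : X -> Sigma -> X) (c : set X)
    (UU : set (set (seq Sigma))) : Prop :=
  forall C, UU C -> exists w, C = cls delta c w.

Definition sigmahat (delta : X -> Sigma -> X) (c : set X)
    (UU : set (set (seq Sigma))) (u : seq Sigma) : set (set (seq Sigma)) :=
  [set C | exists w, C = cls delta c w /\ UU (cls delta c (w ++ rev u))].

Definition LmuPL (delta : X -> Sigma -> X) (c : set X)
    (UU : set (set (seq Sigma))) : set (seq Sigma) :=
  [set u | sigmahat delta c UU u (cls delta c [::])].

End Automata.

Inductive boolgen (X : Type) (G : set (set X)) : set X -> Prop :=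
| bg_gen U : G U -> boolgen G U
| bg_empty : boolgen G set0
| bg_compl U : boolgen G U -> boolgen G (~` U)
| bg_union U V : boolgen G U -> boolgen G V -> boolgen G (U `|` V).

(* Since <c> generates P(X) as a Boolean algebra, every singleton {x} is a
   Boolean combination of sets hat delta(c)(w); hence u ~ v forces
   delta(x)(u^r) = delta(x)(v^r) for every state x.  Languages of cofree(X,delta)
   cannot distinguish words that act identically on X, so a language K in it is
   recovered as L(U_K) with U_K = { [w] | w^r \in K }. *)
From mathcomp Require Import all_boot.
From mathcomp Require Import boolp classical_sets.

Set Implicit Arguments.
Unset Strict Implicit.
Unset Printing Implicit Defensive.

Local Open Scope classical_set_scope.

Section BooleanClosure.
Variables (T : Type) (G : set (set T)).

Lemma boolgen_iff (x y : T) :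
  (forall U, G U -> U x <-> U y) -> forall U, boolgen G U -> U x <-> U y.
Proof.
move=> Gxy U GU; elim: GU => [V GV|//|V _ IH|V W _ IV _ IW] /=.
- exact: Gxy.
- by split=> nV Vz; apply: nV; apply/IH.
- by split=> -[/IV|/IW]; by [left|right].
Qed.

Lemma boolgen_full_separates (x y : T) :
  (forall U, boolgen G U) -> (forall U, G U -> U x <-> U y) -> x = y.
Proof.
move=> full Gxy.
by have [_ ->] := boolgen_iff Gxy (full [set z | z = y]).
Qed.

End BooleanClosure.

Section Automaton.
Variables (Sigma : finType) (X : Type) (delta : X -> Sigma -> X).

Lemma hatdeltaE (U : set X) (w : seq Sigma) (x : X) :
  hatdelta delta U w x = U (dstar delta x (rev w)).
Proof.
elim: w U x => [|a w IH] U x //=.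
by rewrite IH rev_cons /dstar foldl_rcons.
Qed.

Lemma dstar_cat (x : X) (u v : seq Sigma) :
  dstar delta x (u ++ v) = dstar delta (dstar delta x u) v.
Proof. exact: foldl_cat. Qed.

Lemma cofree_dstar_eq (K : set (seq Sigma)) (u v : seq Sigma) :
  cofree delta K -> (forall x, dstar delta x u = dstar delta x v) -> K u -> K v.
Proof.
move=> HK; elim: HK u v => {K} [x U|V a _ IH] u v uv /=.
- by rewrite /Lang /= uv.
- by apply: IH => y; exact: uv.
Qed.

Variable c : set X.

Lemma cls_eq_approx (u v : seq Sigma) :
  cls delta c u = cls delta c v -> approx delta c u v.
Proof. by move=> uv; have : cls delta c v v by []; rewrite -uv. Qed.

Hypothesis angle_full : forall U : set X, boolgen (angle delta c) U.

Lemma approx_dstar (u v : seq Sigma) (x : X) :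
  approx delta c u v -> dstar delta x (rev u) = dstar delta x (rev v).
Proof.
move=> uv; apply: (boolgen_full_separates angle_full) => U HU.
by rewrite -!hatdeltaE (uv U HU).
Qed.

Definition rev_classes (K : set (seq Sigma)) : set (set (seq Sigma)) :=
  [set C | exists w, C = cls delta c w /\ K (rev w)].

Lemma rev_classes_muPL_state (K : set (seq Sigma)) :
  muPL_state delta c (rev_classes K).
Proof. by move=> C [w [-> _]]; exists w. Qed.

Lemma LmuPL_rev_classes (K : set (seq Sigma)) :
  cofree delta K -> LmuPL delta c (rev_classes K) = K.
Proof.
move=> HK; apply/seteqP; split => u /=.
- case=> w [eps_w [w' [wu_w' Kw']]].
  have {}eps_w := cls_eq_approx eps_w.
  have {}wu_w' := cls_eq_approx wu_w'.
  apply: (cofree_dstar_eq HK _ Kw') => x.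
  rewrite -(approx_dstar x wu_w') rev_cat revK dstar_cat.
  by rewrite -(approx_dstar _ eps_w).
- move=> Ku; exists [::]; split=> //.
  by exists (rev u); rewrite cat0s revK.
Qed.

End Automaton.

Theorem mainTheorem9 (Sigma : finType) (X : Type)
    (delta : X -> Sigma -> X) (c : set X) :
  (forall U : set X, boolgen (angle delta c) U) ->
  forall K : set (seq Sigma), cofree delta K ->
  exists UU : set (set (seq Sigma)),
    muPL_state delta c UU /\ LmuPL delta c UU = K.
Proof.
move=> angle_full K HK; exists (rev_classes delta c K).
split; first exact: rev_classes_muPL_state.
exact: LmuPL_rev_classes.
Qed.
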